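(* Let $Q$ be a left automorphic loop, $S\le Q$, and let $g_i\in\mathrm{Mlt}_\lambda(Q)$ for $i\in I$. Set $H=\bigcap_{i\in I} g_i(S)$. Then for $x\in Q$, we have $x\in H$ if and only if $x\backslash H=\{x\backslash h : h\in H\}$ is a subloop of $Q$.
   Context: $L_x(y)=xy$; $\mathrm{Mlt}_\lambda(Q)=\langle L_x:x\in Q\rangle$; $\mathrm{Inn}_\lambda(Q)$ is the stabilizer of $1$ in $\mathrm{Mlt}_\lambda(Q)$. A loop is left automorphic if every element of $\mathrm{Inn}_\lambda(Q)$ is an automorphism of $Q$. Left division: $x\backslash y=L_x^{-1}(y)$. If $I=\emptyset$ the intersection is taken to be $Q$. *)

From Stdlib Require Import List.
Import ListNotations.

Record loop := Loop {
  carrier :> Type;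
  mul : carrier -> carrier -> carrier;
  ldiv : carrier -> carrier -> carrier;   (* x \ y = L_x^{-1} y *)
  rdiv : carrier -> carrier -> carrier;   (* y / x = R_x^{-1} y *)
  one : carrier;
  ldivK : forall x y, ldiv x (mul x y) = y;
  mulldK : forall x y, mul x (ldiv x y) = y;
  rdivK : forall x y, rdiv (mul y x) x = y;
  mulrdK : forall x y, mul (rdiv y x) x = y;
  mul1l : forall x, mul one x = x;
  mul1r : forall x, mul x one = x
}.

Arguments mul {Q} : rename.
Arguments ldiv {Q} : rename.
Arguments rdiv {Q} : rename.
Arguments one {Q} : rename.

Section LoopDefs.
Variable Q : loop.

Definition Lt (x : Q) : Q -> Q := fun y => mul x y.

(* Words in the generators L_x and L_x^{-1}: (true, x) stands for L_x,
   (false, x) for L_x^{-1} = ldiv x. *)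
Fixpoint eval_word (w : list (bool * Q)) : Q -> Q :=
  match w with
  | [] => fun y => y
  | (true, x) :: w' => fun y => Lt x (eval_word w' y)
  | (false, x) :: w' => fun y => ldiv x (eval_word w' y)
  end.

(* Mlt_lambda(Q) = < L_x : x in Q >, as a group of permutations of Q:
   f belongs to it iff f (extensionally) is a product of generators and
   their inverses. *)
Definition in_MltL (f : Q -> Q) : Prop :=
  exists w, forall y, f y = eval_word w y.

Definition in_InnL (f : Q -> Q) : Prop := in_MltL f /\ f one = one.

Definition is_automorphism (f : Q -> Q) : Prop :=
  (forall x y, f (mul x y) = mul (f x) (f y)) /\
  (forall x y, f x = f y -> x = y) /\
  (forall y, exists x, f x = y).

Definition left_automorphic : Prop :=
  forall f, in_InnL f -> is_automorphism f.

Definition subloop (S : Q -> Prop) : Prop :=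
  S one /\
  (forall x y, S x -> S y -> S (mul x y)) /\
  (forall x y, S x -> S y -> S (ldiv x y)) /\
  (forall x y, S x -> S y -> S (rdiv x y)).

Definition image (g : Q -> Q) (S : Q -> Prop) : Q -> Prop :=
  fun z => exists s, S s /\ z = g s.

(* Intersection of an indexed family (equals Q when I is empty). *)
Definition bigcap {I : Type} (A : I -> Q -> Prop) : Q -> Prop :=
  fun z => forall i, A i z.

Definition ldiv_set (x : Q) (H : Q -> Prop) : Q -> Prop :=
  fun z => exists h, H h /\ z = ldiv x h.

End LoopDefs.

Arguments in_MltL {Q}.
Arguments in_InnL {Q}.
Arguments is_automorphism {Q}.
Arguments subloop {Q}.
Arguments image {Q}.
Arguments bigcap {Q I}.
Arguments ldiv_set {Q}.

(* If x = g_i(s_i) with s_i in S, then x\g_i(S) is the image of S under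
   t |-> x \ g_i(s_i t), a map of Mlt_lambda(Q) fixing 1, hence an
   automorphism; so each x\g_i(S) is a subloop, and x\H, their intersection,
   is one too. Conversely 1 in x\H forces x in H. *)
From Stdlib Require Import List.
Import ListNotations.

Section Loop.
Variable Q : loop.

Lemma ldiv_eq (a b c : Q) : mul a c = b -> c = ldiv a b.
Proof. intros <-. now rewrite ldivK. Qed.

Lemma rdiv_eq (a b c : Q) : mul c a = b -> c = rdiv b a.
Proof. intros <-. now rewrite rdivK. Qed.

Lemma eval_word_app (w1 w2 : list (bool * Q)) y :
  eval_word Q (w1 ++ w2) y = eval_word Q w1 (eval_word Q w2 y).
Proof.
  induction w1 as [|[[|] a] w IH]; simpl; try reflexivity; now rewrite IH.
Qed.

Lemma in_MltL_conj (f : Q -> Q) (a b : Q) :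
  in_MltL f -> in_MltL (fun t => ldiv a (f (mul b t))).
Proof.
  intros [w hw]. exists ((false, a) :: w ++ [(true, b)]). intro y.
  simpl. now rewrite eval_word_app, hw.
Qed.

Lemma aut_one (k : Q -> Q) : is_automorphism k -> k one = one.
Proof.
  intros [hm _].
  assert (e : mul (k one) (k one) = k one) by now rewrite <- hm, mul1r.
  rewrite (rdiv_eq _ _ _ e). symmetry. apply rdiv_eq, mul1l.
Qed.

Lemma subloop_ext (A B : Q -> Prop) :
  (forall z, A z <-> B z) -> subloop A -> subloop B.
Proof.
  intros AB [A1 [Am [Al Ar]]].
  repeat split; intros; apply AB;
    [apply A1 | apply Am | apply Al | apply Ar]; now apply AB.
Qed.

Lemma subloop_bigcap (I : Type) (A : I -> Q -> Prop) :
  (forall i, subloop (A i)) -> subloop (bigcap A).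
Proof.
  intros hA. repeat split; intros; intro i;
    destruct (hA i) as [A1 [Am [Al Ar]]]; auto.
Qed.

Lemma subloop_image_aut (k : Q -> Q) (S : Q -> Prop) :
  is_automorphism k -> subloop S -> subloop (image k S).
Proof.
  intros ka [S1 [Sm [Sl Sr]]]. pose proof ka as [hm _].
  repeat split.
  - exists one. split; [exact S1 | symmetry; exact (aut_one k ka)].
  - intros a b [s [hs ->]] [t [ht ->]]. exists (mul s t). auto.
  - intros a b [s [hs ->]] [t [ht ->]]. exists (ldiv s t). split; [auto|].
    symmetry. apply ldiv_eq. now rewrite <- hm, mulldK.
  - intros a b [s [hs ->]] [t [ht ->]]. exists (rdiv s t). split; [auto|].
    symmetry. apply rdiv_eq. now rewrite <- hm, mulrdK.
Qed.

Lemma ldiv_set_bigcap (I : Type) (A : I -> Q -> Prop) (x z : Q) :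
  ldiv_set x (bigcap A) z <-> bigcap (fun i => ldiv_set x (A i)) z.
Proof.
  split.
  - intros [h [hh ->]] i. now exists h.
  - intros hz. exists (mul x z). split; [|now rewrite ldivK].
    intro i. destruct (hz i) as [h [hh ->]]. now rewrite mulldK.
Qed.

(* Uses s0 S = S, valid because S is a subloop containing s0. *)
Lemma ldiv_set_image (g : Q -> Q) (S : Q -> Prop) (s0 z : Q) :
  subloop S -> S s0 ->
  ldiv_set (g s0) (image g S) z <->
  image (fun t => ldiv (g s0) (g (mul s0 t))) S z.
Proof.
  intros [_ [Sm [Sl _]]] hs0. split.
  - intros [h [[s [hs ->]] ->]]. exists (ldiv s0 s). split; [auto|].
    now rewrite mulldK.
  - intros [t [ht ->]]. exists (g (mul s0 t)). split; [|reflexivity].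
    exists (mul s0 t). auto.
Qed.

Lemma subloop_ldiv_set_image (g : Q -> Q) (S : Q -> Prop) (x : Q) :
  left_automorphic Q -> subloop S -> in_MltL g -> image g S x ->
  subloop (ldiv_set x (image g S)).
Proof.
  intros hQ hS hg [s0 [hs0 ->]].
  apply (subloop_ext _ _ (fun z => iff_sym (ldiv_set_image g S s0 z hS hs0))).
  apply subloop_image_aut; [|exact hS].
  apply hQ. split; [now apply in_MltL_conj|].
  rewrite mul1r. symmetry. apply ldiv_eq, mul1r.
Qed.

Lemma ldiv_set_one (H : Q -> Prop) (x : Q) : ldiv_set x H one -> H x.
Proof.
  intros [h [hh e]].
  replace x with h; [exact hh|].
  now rewrite <- (mulldK Q x h), <- e, mul1r.
Qed.

End Loop.

Theorem lemma6p5 (Q : loop) (hQ : left_automorphic Q)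
  (S : Q -> Prop) (hS : subloop S)
  (I : Type) (g : I -> Q -> Q) (hg : forall i, in_MltL (g i))
  (x : Q) :
  let H := bigcap (fun i => image (g i) S) in
  H x <-> subloop (ldiv_set x H).
Proof.
  intros H. split.
  - intros hx.
    apply (subloop_ext Q _ _ (fun z => iff_sym (ldiv_set_bigcap Q I _ x z))).
    apply subloop_bigcap. intro i.
    now apply subloop_ldiv_set_image.
  - intros [h1 _]. now apply ldiv_set_one.
Qed.
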